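(* A function $g\in\mathcal C$ satisfies $Tg=g$ if and only if $g\colon[0,1]\to[0,1]$ solves $-\gamma g'=g^{-1}$ for some $\gamma>0$ (with $g^{-1}$ the compositional inverse). In that case moreover: (a) $g\in\breve{\mathcal D}^\sharp$; (b) $\int g=\gamma$; (c) $\sigma(g)=\gamma$; (d) $g^*$ and $g'$ are continuously differentiable on $(0,1]$; (e) $g''(1)=1$ and $(g^* )'(1)=-\gamma$.
   Context: ''Decreasing'' means non-increasing; $\int f:=\int_0^1 f(x)\,dx$. $\mathcal E$: measurable decreasing $f\colon[0,1]\to[0,\infty)$ with $f(0)=1$ and $\int f>0$. $\mathcal C$: continuous $f\in\mathcal E$ with $f(1)=0$; $\breve{\mathcal C}$: convex $f\in\mathcal C$. $\mathcal D$: strictly decreasing $f\in\mathcal C$. $\mathcal D'$: $f\in\mathcal D$ continuously differentiable on $(0,1]$. $\mathcal D^\sharp$: $f\in\mathcal D'$ with $f'(1)=0$ and $\lim_{x\to0}f'(x)$ existing in $(-\infty,0]$; $\breve{\mathcal D}^\sharp:=\mathcal D^\sharp\cap\breve{\mathcal C}$. For $g\in\breve{\mathcal C}$, the stride is $\sigma(g):=\sup\{\alpha\ge0:\ \alpha-x\le\alpha g(x)\ \forall x\in[0,1]\}$. For $g\in\mathcal E$, $g^*(y):=\sup\{x\in[0,1]:g(x)\ge y\}$ (equal to $g^{-1}$ when $g\in\mathcal D$). $T$ on $\mathcal E$: $(Tf)(x)=\frac{\int_x^1f^*}{\int f}$. *)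

From Stdlib Require Import Reals.
From Coquelicot Require Import Coquelicot.
Open Scope R_scope.

(* Functions on [0,1] are represented as f : R -> R; only values on [0,1] matter. *)
Definition I01 (x : R) : Prop := 0 <= x <= 1.
Definition I01l (x : R) : Prop := 0 < x <= 1.

(* "decreasing" = non-increasing on [0,1] *)
Definition decreasing01 (f : R -> R) : Prop :=
  forall x y, 0 <= x -> x <= y -> y <= 1 -> f y <= f x.

Definition strictly_decreasing01 (f : R -> R) : Prop :=
  forall x y, 0 <= x -> x < y -> y <= 1 -> f y < f x.

(* integral over [0,1] (Riemann; all functions involved are monotone or continuous) *)
Definition int01 (f : R -> R) : R := RInt f 0 1.

Definition continuous_on (D : R -> Prop) (f : R -> R) : Prop :=
  forall x, D x -> filterlim f (within D (locally x)) (locally (f x)).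

Definition has_deriv_on (D : R -> Prop) (f : R -> R) (x l : R) : Prop :=
  filterlim (fun y => (f y - f x) / (y - x))
            (within (fun y => D y /\ y <> x) (locally x)) (locally l).

Definition C1_on_0_1 (f f' : R -> R) : Prop :=
  (forall x, I01l x -> has_deriv_on I01 f x (f' x)) /\ continuous_on I01l f'.

(* class E (measurability is automatic for monotone functions) *)
Definition classE (f : R -> R) : Prop :=
  decreasing01 f /\ (forall x, I01 x -> 0 <= f x) /\ f 0 = 1 /\ 0 < int01 f.

Definition classC (f : R -> R) : Prop :=
  classE f /\ continuous_on I01 f /\ f 1 = 0.

Definition convex01 (f : R -> R) : Prop :=
  forall x y t, I01 x -> I01 y -> 0 <= t <= 1 ->
    f (t * x + (1 - t) * y) <= t * f x + (1 - t) * f y.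

Definition classCbreve (f : R -> R) : Prop := classC f /\ convex01 f.

Definition classD (f : R -> R) : Prop := classC f /\ strictly_decreasing01 f.

Definition classDprime (f : R -> R) : Prop :=
  classD f /\ exists f', C1_on_0_1 f f'.

Definition classDsharp (f : R -> R) : Prop :=
  classD f /\ exists f', C1_on_0_1 f f' /\ f' 1 = 0 /\
    exists L, L <= 0 /\ filterlim f' (at_right 0) (locally L).

Definition classDsharp_breve (f : R -> R) : Prop :=
  classDsharp f /\ classCbreve f.

Definition stride (g : R -> R) : R :=
  real (Lub_Rbar (fun a => 0 <= a /\ forall x, I01 x -> a - x <= a * g x)).

Definition gstar (g : R -> R) (y : R) : R :=
  real (Lub_Rbar (fun x => I01 x /\ y <= g x)).

Definition Top (f : R -> R) (x : R) : R := RInt (gstar f) x 1 / int01 f.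

Definition solves_ode (g : R -> R) (gamma : R) : Prop :=
  (forall x, I01 x -> I01 (g x)) /\
  exists ginv : R -> R,
    (forall x, I01 x -> I01 (ginv x) /\ ginv (g x) = x /\ g (ginv x) = x) /\
    (forall x, I01l x -> has_deriv_on I01 g x (- ginv x / gamma)).

From Stdlib Require Import Reals Lra Lia Classical.
From Coquelicot Require Import Coquelicot.
Open Scope R_scope.

(* Write h := g^*.  Since h is nonincreasing and [0,1]-valued it is integrable, and
   T g = g says exactly that  int_x^1 h = gamma g(x)  with gamma = int g.  This
   representation forces g to be strictly decreasing (h > 0 on [0,1)), so h is the
   continuous inverse of g and differentiating gives -gamma g' = h = g^{-1}.
   Conversely, under the ODE the function  int_x^1 h - gamma g(x)  has derivative
   zero and vanishes at 1.  Everything else is read off the representation: g is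
   convex because h is nonincreasing; int g = int h = gamma g(0) = gamma (integral of
   an inverse function); gamma (1 - g x) = int_0^x h lies between x h(x) and x, which
   pins the stride to gamma h(0) = gamma; and the inverse function rule gives
   h' = -gamma / h(h(y)) and g'' = 1 / h(h(y)), which equal -gamma and 1 at y = 1
   because h(1) = 0 and h(0) = 1. *)

(** * Continuity and derivatives relative to a set *)

Lemma filterlim_locally_eps {T} (F : (T -> Prop) -> Prop) (FF : Filter F)
  (f : T -> R) l :
  filterlim f F (locally l) <-> forall eps, 0 < eps -> F (fun y => Rabs (f y - l) < eps).
Proof.
  rewrite filterlim_locally. split.
  - intros H eps He. exact (H (mkposreal eps He)).
  - intros H eps. exact (H eps (cond_pos eps)).
Qed.

Lemma within_locally_eps (D P : R -> Prop) x :
  within D (locally x) P <-> exists d, 0 < d /\ forall y, D y -> Rabs (y - x) < d -> P y.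
Proof.
  split.
  - intros [d Hd]. exists d. split; [apply cond_pos|]. intros y Dy Hy. apply Hd; auto.
  - intros [d [Hd H]]. exists (mkposreal d Hd). intros y Hy Dy. apply H; auto.
Qed.

Lemma continuous_within_eps (D : R -> Prop) (f : R -> R) x :
  filterlim f (within D (locally x)) (locally (f x)) <->
  forall eps, 0 < eps -> exists d, 0 < d /\
    forall y, D y -> Rabs (y - x) < d -> Rabs (f y - f x) < eps.
Proof.
  rewrite (filterlim_locally_eps _ (within_filter _ _ _ _)). split.
  - intros H eps He. exact (proj1 (within_locally_eps _ _ _) (H eps He)).
  - intros H eps He. apply within_locally_eps. auto.
Qed.

Lemma continuous_eps (f : R -> R) x :
  continuous f x <->
  forall eps, 0 < eps -> exists d, 0 < d /\
    forall y, Rabs (y - x) < d -> Rabs (f y - f x) < eps.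
Proof.
  unfold continuous. rewrite (filterlim_locally_eps _ (@filter_filter _ _ (locally_filter _))).
  split.
  - intros H eps He. destruct (H eps He) as [d Hd]. exists d.
    split; [apply cond_pos|]. intros y Hy. exact (Hd y Hy).
  - intros H eps He. destruct (H eps He) as [d [Hd H']]. exists (mkposreal d Hd).
    intros y Hy. exact (H' y Hy).
Qed.

Lemma has_deriv_on_eps (D : R -> Prop) (f : R -> R) x l :
  has_deriv_on D f x l <->
  forall eps, 0 < eps -> exists d, 0 < d /\
    forall y, D y -> y <> x -> Rabs (y - x) < d -> Rabs ((f y - f x) / (y - x) - l) < eps.
Proof.
  unfold has_deriv_on. rewrite (filterlim_locally_eps _ (within_filter _ _ _ _)). split.
  - intros H eps He. destruct (proj1 (within_locally_eps _ _ _) (H eps He)) as [d [Hd H']].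
    exists d. split; [exact Hd|]. intros y Dy Ny Hy. apply H'; auto.
  - intros H eps He. apply within_locally_eps. destruct (H eps He) as [d [Hd H']].
    exists d. split; [exact Hd|]. intros y [Dy Ny] Hy. apply H'; auto.
Qed.

Lemma continuous_within (D : R -> Prop) (f : R -> R) x :
  continuous f x -> filterlim f (within D (locally x)) (locally (f x)).
Proof. apply filterlim_filter_le_1, filter_le_within. Qed.

Lemma continuous_on_of_continuous (D : R -> Prop) (f : R -> R) :
  (forall x, D x -> continuous f x) -> continuous_on D f.
Proof. intros H x Dx. apply continuous_within, H, Dx. Qed.

Lemma is_derive_has_deriv_on (D : R -> Prop) f x l :
  is_derive f x l -> has_deriv_on D f x l.
Proof.
  intros H. apply is_derive_Reals in H. apply has_deriv_on_eps. intros eps He.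
  destruct (H eps He) as [d Hd]. exists d. split; [apply cond_pos|].
  intros y _ Ny Hy. specialize (Hd (y - x) ltac:(lra) Hy).
  replace (x + (y - x)) with y in Hd by ring. exact Hd.
Qed.

Lemma has_deriv_on_is_derive (D : R -> Prop) f x l :
  locally x D -> has_deriv_on D f x l -> is_derive f x l.
Proof.
  intros [r Hr] H. apply is_derive_Reals. intros eps He.
  destruct (proj1 (has_deriv_on_eps _ _ _ _) H eps He) as [d [Hd H']].
  assert (Hp : 0 < Rmin d r) by (apply Rmin_pos; [lra | apply cond_pos]).
  exists (mkposreal _ Hp). intros k Hk Hkd. simpl in Hkd.
  pose proof (Rmin_l d r). pose proof (Rmin_r d r).
  specialize (H' (x + k)). replace (x + k - x) with k in H' by ring. apply H'; [|lra|lra].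
  apply Hr. change (Rabs (x + k - x) < r). replace (x + k - x) with k by ring. lra.
Qed.

Lemma has_deriv_on_ext (D : R -> Prop) f1 f2 x l :
  (forall y, D y -> f1 y = f2 y) -> D x ->
  has_deriv_on D f1 x l -> has_deriv_on D f2 x l.
Proof.
  intros Hf Dx. apply filterlim_ext_loc. exists (mkposreal 1 Rlt_0_1).
  intros y _ [Dy _]. rewrite (Hf y Dy), (Hf x Dx). reflexivity.
Qed.

Lemma has_deriv_on_scal (D : R -> Prop) f x l k :
  has_deriv_on D f x l -> has_deriv_on D (fun y => k * f y) x (k * l).
Proof.
  intros H. apply (filterlim_ext (fun y => k * ((f y - f x) / (y - x)))).
  { intros y. unfold Rdiv. ring. }
  eapply filterlim_comp; [exact H|]. exact (filterlim_scal_r k l).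
Qed.

Lemma has_deriv_on_inverse (D : R -> Prop) (g h : R -> R) y l :
  (forall u, D u -> D (h u) /\ g (h u) = u) -> D y -> continuous h y ->
  has_deriv_on D g (h y) l -> l <> 0 -> has_deriv_on D h y (/ l).
Proof.
  intros Hgh Hy Hc Hd Hl. apply has_deriv_on_eps. intros eps He.
  destruct (proj1 (continuous_eps _ l) (continuous_Rinv l Hl) eps He) as [eta [Heta Hinv]].
  destruct (proj1 (has_deriv_on_eps _ _ _ _) Hd eta Heta) as [d1 [Hd1 Hq]].
  destruct (proj1 (continuous_eps h y) Hc d1 Hd1) as [d [Hdp Hh]].
  exists d. split; [exact Hdp|]. intros y' Hy' Ny' Hyy'.
  destruct (Hgh y' Hy') as [I' E']. destruct (Hgh y Hy) as [I0 E0].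
  assert (Nh : h y' <> h y) by (intros Eq; apply Ny'; rewrite <- E', <- E0, Eq; reflexivity).
  specialize (Hinv _ (Hq (h y') I' Nh (Hh y' Hyy'))).
  replace ((h y' - h y) / (y' - y)) with (/ ((g (h y') - g (h y)) / (h y' - h y))).
  - exact Hinv.
  - rewrite E', E0. field. split; lra.
Qed.

Lemma eq_of_is_derive_0 (F : R -> R) a b :
  a <= b -> (forall t, a < t < b -> is_derive F t 0) ->
  (forall t, a <= t <= b -> continuous F t) -> F a = F b.
Proof.
  intros Hab Hd Hc.
  destruct (MVT_gen F a b (fun _ => 0)) as [c [_ Hmvt]];
    [intros x Hx; rewrite Rmin_left, Rmax_right in Hx by lra..|lra].
  - apply Hd; lra.
  - apply continuity_pt_filterlim, Hc; lra.
Qed.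

Lemma continuous_decreasing_onto_01 (phi : R -> R) :
  decreasing phi -> (forall y, I01 (phi y)) -> (forall v, I01 v -> exists y, phi y = v) ->
  forall y0, continuous phi y0.
Proof.
  intros Hm Hb Hs y0. apply continuous_eps. intros eps He. set (v0 := phi y0).
  assert (Hv0 : I01 v0) by apply Hb.
  assert (Hleft : exists z1, z1 < y0 /\ phi z1 < v0 + eps).
  { destruct (Rle_dec (v0 + eps / 2) 1).
    - destruct (Hs (v0 + eps / 2)) as [z Hz]; [unfold I01 in *; lra|].
      exists z. split; [|lra]. apply Rnot_le_lt. intros Hle.
      pose proof (Hm _ _ Hle). unfold v0 in *. lra.
    - exists (y0 - 1). split; [lra|]. destruct (Hb (y0 - 1)). lra. }
  assert (Hright : exists z2, y0 < z2 /\ v0 - eps < phi z2).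
  { destruct (Rle_dec 0 (v0 - eps / 2)).
    - destruct (Hs (v0 - eps / 2)) as [z Hz]; [unfold I01 in *; lra|].
      exists z. split; [|lra]. apply Rnot_le_lt. intros Hle.
      pose proof (Hm _ _ Hle). unfold v0 in *. lra.
    - exists (y0 + 1). split; [lra|]. destruct (Hb (y0 + 1)). lra. }
  destruct Hleft as [z1 [Hz1 Hphi1]], Hright as [z2 [Hz2 Hphi2]].
  exists (Rmin (y0 - z1) (z2 - y0)). split; [apply Rmin_pos; lra|].
  intros y Hy. apply Rabs_lt_between in Hy.
  pose proof (Rmin_l (y0 - z1) (z2 - y0)). pose proof (Rmin_r (y0 - z1) (z2 - y0)).
  pose proof (Hm z1 y ltac:(lra)). pose proof (Hm y z2 ltac:(lra)).
  apply Rabs_lt_between. destruct (Rle_dec y y0).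
  - pose proof (Hm y y0 r). unfold v0 in *. lra.
  - pose proof (Hm y0 y ltac:(lra)). unfold v0 in *. lra.
Qed.

(* [clamp01] extends a function given on [0,1] to all of R, so that two-sided
   continuity, derivatives and the mean value theorem apply to it. *)
Definition clamp01 x := Rmax 0 (Rmin 1 x).

Lemma clamp01_I01 x : I01 (clamp01 x).
Proof. unfold clamp01, I01, Rmax, Rmin. repeat destruct Rle_dec; lra. Qed.

Lemma clamp01_id x : I01 x -> clamp01 x = x.
Proof. unfold clamp01, I01, Rmax, Rmin. repeat destruct Rle_dec; lra. Qed.

Lemma clamp01_lipschitz x y : Rabs (clamp01 y - clamp01 x) <= Rabs (y - x).
Proof.
  unfold clamp01, Rmax, Rmin. repeat destruct Rle_dec; unfold Rabs; repeat destruct Rcase_abs; lra.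
Qed.

Lemma locally_I01 x : 0 < x < 1 -> locally x I01.
Proof.
  intros Hx. assert (Hr : 0 < Rmin x (1 - x)) by (apply Rmin_pos; lra).
  exists (mkposreal _ Hr). intros y Hy. change (Rabs (y - x) < Rmin x (1 - x)) in Hy.
  pose proof (Rmin_l x (1 - x)). pose proof (Rmin_r x (1 - x)).
  apply Rabs_lt_between in Hy. unfold I01. lra.
Qed.

Lemma continuous_clamp01_comp (f : R -> R) x :
  continuous_on I01 f -> continuous (fun y => f (clamp01 y)) x.
Proof.
  intros Hf. apply continuous_eps. intros eps He.
  destruct (proj1 (continuous_within_eps _ _ _) (Hf _ (clamp01_I01 x)) eps He) as [d [Hd H]].
  exists d. split; [exact Hd|]. intros y Hy. apply H; [apply clamp01_I01|].
  apply Rle_lt_trans with (Rabs (y - x)); [apply clamp01_lipschitz | exact Hy].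
Qed.

Lemma is_derive_clamp01_comp (f : R -> R) x l :
  has_deriv_on I01 f x l -> 0 < x < 1 -> is_derive (fun y => f (clamp01 y)) x l.
Proof.
  intros H Hx. apply (is_derive_ext_loc f).
  - apply (filter_imp I01); [|apply locally_I01, Hx]. intros y Hy. rewrite clamp01_id; auto.
  - apply (has_deriv_on_is_derive I01); [apply locally_I01, Hx | exact H].
Qed.

(** * Integrals of monotone functions *)

Lemma RInt_Chasles_R (h : R -> R) a b c :
  ex_RInt h a b -> ex_RInt h b c -> RInt h a b + RInt h b c = RInt h a c.
Proof. exact (RInt_Chasles h a b c). Qed.

Lemma RInt_point_R (h : R -> R) a : RInt h a a = 0.
Proof. exact (RInt_point a h). Qed.

Lemma RInt_const_R a b c : RInt (fun _ => c) a b = (b - a) * c.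
Proof. exact (RInt_const a b c). Qed.

Lemma is_derive_RInt_lower (h : R -> R) b x :
  (forall u v, ex_RInt h u v) -> continuous h x ->
  is_derive (fun a => RInt h a b) x (- h x).
Proof.
  intros Hi Hc. apply (is_derive_RInt' h _ x b); [|exact Hc].
  exists (mkposreal 1 Rlt_0_1). intros y _. apply (RInt_correct (V := R_CompleteNormedModule)), Hi.
Qed.

Lemma is_derive_RInt_upper (h : R -> R) a x :
  (forall u v, ex_RInt h u v) -> continuous h x ->
  is_derive (fun b => RInt h a b) x (h x).
Proof.
  intros Hi Hc. apply (is_derive_RInt h _ a x); [|exact Hc].
  exists (mkposreal 1 Rlt_0_1). intros y _. apply (RInt_correct (V := R_CompleteNormedModule)), Hi.
Qed.

Lemma RInt_decreasing_lb (h : R -> R) x y :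
  decreasing h -> ex_RInt h x y -> x <= y -> (y - x) * h y <= RInt h x y.
Proof.
  intros Hm Hi Hxy. rewrite <- RInt_const_R.
  apply RInt_le; [exact Hxy | apply ex_RInt_const | exact Hi |].
  intros u Hu. apply Hm. lra.
Qed.

Lemma RInt_decreasing_ub (h : R -> R) x y :
  decreasing h -> ex_RInt h x y -> x <= y -> RInt h x y <= (y - x) * h x.
Proof.
  intros Hm Hi Hxy. rewrite <- RInt_const_R.
  apply RInt_le; [exact Hxy | exact Hi | apply ex_RInt_const |].
  intros u Hu. apply Hm. lra.
Qed.

Lemma convex01_RInt_tail (h : R -> R) :
  decreasing h -> (forall u v, ex_RInt h u v) -> convex01 (fun y => RInt h y 1).
Proof.
  intros Hm Hi.
  assert (Hle : forall x y t, x <= y -> 0 <= t <= 1 ->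
    RInt h (t * x + (1 - t) * y) 1 <= t * RInt h x 1 + (1 - t) * RInt h y 1).
  { intros x y t Hxy Ht. set (z := t * x + (1 - t) * y).
    assert (Hxz : x <= z) by (unfold z; nra). assert (Hzy : z <= y) by (unfold z; nra).
    rewrite <- (RInt_Chasles_R h x z 1), <- (RInt_Chasles_R h z y 1) by auto.
    pose proof (RInt_decreasing_lb h x z Hm (Hi _ _) Hxz).
    pose proof (RInt_decreasing_ub h z y Hm (Hi _ _) Hzy).
    assert (E : t * (z - x) * h z = (1 - t) * (y - z) * h z) by (unfold z; ring).
    nra. }
  intros x y t _ _ Ht. destruct (Rle_dec x y) as [Hxy|Hxy].
  - apply Hle; lra.
  - replace (t * x + (1 - t) * y) with ((1 - t) * y + (1 - (1 - t)) * x) by ring.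
    pose proof (Hle y x (1 - t) ltac:(lra) ltac:(lra)). lra.
Qed.

Lemma ex_RInt_const_open (h : R -> R) c a b :
  a <= b -> (forall x, a < x < b -> h x = c) -> ex_RInt h a b.
Proof.
  intros Hab Hh. apply (ex_RInt_ext (fun _ => c)); [|apply ex_RInt_const].
  intros x Hx. rewrite Rmin_left, Rmax_right in Hx by lra. symmetry. apply Hh. lra.
Qed.

Lemma ex_RInt_step (h : R -> R) (t : Rbar) a b :
  (forall x : R, Rbar_lt x t -> h x = 1) -> (forall x : R, Rbar_lt t x -> h x = 0) ->
  ex_RInt h a b.
Proof.
  intros H1 H0.
  assert (Hord : forall a b, a <= b -> ex_RInt h a b).
  { clear a b. intros a b Hab. destruct t as [t| |]; simpl in *.
    - destruct (Rle_dec t a).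
      { apply (ex_RInt_const_open _ 0); auto. intros x Hx. apply H0. lra. }
      destruct (Rle_dec b t).
      { apply (ex_RInt_const_open _ 1); auto. intros x Hx. apply H1. lra. }
      apply ex_RInt_Chasles with t.
      + apply (ex_RInt_const_open _ 1); [lra|]. intros x Hx. apply H1. lra.
      + apply (ex_RInt_const_open _ 0); [lra|]. intros x Hx. apply H0. lra.
    - apply (ex_RInt_const_open _ 1); auto.
    - apply (ex_RInt_const_open _ 0); auto. }
  destruct (Rle_dec a b); [auto|]. apply ex_RInt_swap, Hord. lra.
Qed.

(* A superlevel set of a nonincreasing function is a half-line ending at its supremum. *)
Lemma ex_RInt_superlevel_indicator (F : R -> R) c a b :
  decreasing F -> ex_RInt (fun x => if Rle_dec c (F x) then 1 else 0) a b.
Proof.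
  intros HF. set (E := fun x => c <= F x).
  destruct (Lub_Rbar_correct E) as [Hub Hlub].
  apply (ex_RInt_step _ (Lub_Rbar E)).
  - intros x Hx. destruct (Rle_dec c (F x)) as [|Hn]; [reflexivity|exfalso].
    assert (Hx_ub : is_ub_Rbar E x).
    { intros e He. simpl. apply Rnot_lt_le. intros Hlt. apply Hn.
      apply Rle_trans with (F e); [exact He | apply HF; lra]. }
    exact (Rbar_lt_not_le _ _ Hx (Hlub _ Hx_ub)).
  - intros x Hx. destruct (Rle_dec c (F x)) as [Hc|]; [exfalso|reflexivity].
    exact (Rbar_lt_not_le _ _ Hx (Hub x Hc)).
Qed.

Fixpoint level_count (F : R -> R) (n : nat) (x : R) : R :=
  match n with
  | O => 0
  | S m => level_count F m x + (if Rle_dec (INR n) (F x) then 1 else 0)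
  end.

Lemma ex_RInt_level_count F n a b : decreasing F -> ex_RInt (level_count F n) a b.
Proof.
  intros HF. induction n as [|n IH]; simpl.
  - apply ex_RInt_const.
  - apply (ex_RInt_plus (level_count F n)); [exact IH|].
    apply ex_RInt_superlevel_indicator, HF.
Qed.

Lemma level_count_bound F n x :
  0 <= F x <= INR n -> F x - 1 < level_count F n x <= F x.
Proof.
  intros [H0 Hn].
  assert (Hcases : forall m, (INR m <= F x -> level_count F m x = INR m) /\
                        (F x < INR m -> F x - 1 < level_count F m x <= F x)).
  { induction m as [|m [IH1 IH2]]; cbn [level_count].
    - simpl. split; intros; lra.
    - rewrite S_INR. destruct (Rle_dec (INR m + 1) (F x)) as [Hle|Hlt]; split; intros H.
      + rewrite IH1 by lra. ring.
      + lra.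
      + lra.
      + rewrite Rplus_0_r. destruct (Rle_dec (INR m) (F x)).
        * rewrite IH1 by lra. lra.
        * apply IH2. lra. }
  destruct (Hcases n) as [Heq Hlt]. destruct Hn as [Hn|Hn].
  - apply Hlt, Hn.
  - rewrite Heq; lra.
Qed.

(* f is the uniform limit of the staircases  level_count (n f) n / n. *)
Lemma ex_RInt_decreasing_01 (f : R -> R) a b :
  decreasing f -> (forall x, I01 (f x)) -> ex_RInt f a b.
Proof.
  intros Hf Hb.
  set (A := fun (n : nat) x => level_count (fun y => INR (S n) * f y) (S n) x / INR (S n)).
  assert (HA : forall n, ex_RInt (A n) a b).
  { intros n.
    apply (ex_RInt_ext (fun x => / INR (S n) * level_count (fun y => INR (S n) * f y) (S n) x)).
    - intros x _. apply Rmult_comm.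
    - apply (ex_RInt_scal (level_count (fun y => INR (S n) * f y) (S n))).
      apply ex_RInt_level_count. intros x y Hxy.
      apply Rmult_le_compat_l; [apply pos_INR | apply Hf, Hxy]. }
  destruct (filterlim_RInt A a b eventually eventually_filter f (fun n => RInt (A n) a b))
    as [If [_ HIf]].
  - intros n. apply RInt_correct, HA.
  - apply filterlim_locally. intros eps.
    destruct (archimed_cor1 eps (cond_pos eps)) as [N [HN HN0]].
    exists N. intros n Hn t. change (Rabs (A n t - f t) < eps).
    set (m := INR (S n)).
    assert (HNm : INR N <= m) by (apply le_INR; lia).
    assert (HN0' : 0 < INR N) by (apply lt_0_INR; lia).
    assert (Hm_eps : / m < eps).
    { apply Rle_lt_trans with (/ INR N); [apply Rinv_le_contravar; lra | exact HN]. }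
    assert (Hm_inv : 0 < / m) by (apply Rinv_0_lt_compat; lra).
    destruct (Hb t) as [Hf0 Hf1].
    destruct (level_count_bound (fun y => m * f y) (S n) t) as [Hlo Hhi].
    { fold m. split; nra. }
    unfold A. fold m. set (c := level_count (fun y => m * f y) (S n) t) in *.
    replace (c / m - f t) with ((c - m * f t) * / m) by (field; lra).
    apply Rabs_def1; nra.
  - exists If. exact HIf.
Qed.

(** * The generalized inverse *)

Lemma Lub_Rbar_nonempty_01 (E : R -> Prop) :
  (forall x, E x -> I01 x) -> (exists x, E x) ->
  is_lub_Rbar E (real (Lub_Rbar E)) /\ I01 (real (Lub_Rbar E)).
Proof.
  intros HE [x0 Hx0]. destruct (Lub_Rbar_correct E) as [Hub Hlub].
  assert (H1 : Rbar_le (Lub_Rbar E) 1) by (apply Hlub; intros x Hx; apply HE, Hx).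
  pose proof (Hub x0 Hx0) as H0. destruct (HE x0 Hx0).
  destruct (Lub_Rbar E) as [l| |]; simpl in *; try contradiction.
  split; [split; assumption | split; lra].
Qed.

Lemma Lub_Rbar_empty_real (E : R -> Prop) : ~ (exists x, E x) -> real (Lub_Rbar E) = 0.
Proof.
  intros Hn. rewrite (is_lub_Rbar_unique E m_infty); [reflexivity|]. split.
  - intros x Hx. exfalso. eauto.
  - intros b _. destruct b; simpl; trivial.
Qed.

Section GeneralizedInverse.

Variable g : R -> R.

Let level_set y := fun x => I01 x /\ y <= g x.

Lemma gstar_ub y x : I01 x -> y <= g x -> x <= gstar g y.
Proof.
  intros Hx Hy. destruct (Lub_Rbar_nonempty_01 (level_set y)) as [[Hub _] _].
  - intros u Hu. apply Hu.
  - exists x. split; assumption.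
  - exact (Hub x (conj Hx Hy)).
Qed.

Lemma gstar_least y u :
  (exists x, I01 x /\ y <= g x) -> (forall x, I01 x -> y <= g x -> x <= u) -> gstar g y <= u.
Proof.
  intros He Hu. destruct (Lub_Rbar_nonempty_01 (level_set y)) as [[_ Hlub] _].
  - intros x Hx. apply Hx.
  - exact He.
  - apply (Hlub u). intros x [Hx Hy]. exact (Hu x Hx Hy).
Qed.

Lemma gstar_range y : I01 (gstar g y).
Proof.
  destruct (classic (exists x, level_set y x)) as [He|Hn].
  - apply (Lub_Rbar_nonempty_01 (level_set y)); [|exact He]. intros x Hx. apply Hx.
  - unfold gstar. fold (level_set y). rewrite Lub_Rbar_empty_real by exact Hn.
    unfold I01. lra.
Qed.

Lemma gstar_decreasing : decreasing (gstar g).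
Proof.
  intros y1 y2 Hy. destruct (classic (exists x, level_set y2 x)) as [He|Hn].
  - apply gstar_least; [exact He|]. intros x Hx Hgx. apply gstar_ub; [exact Hx | lra].
  - unfold gstar at 1. fold (level_set y2). rewrite Lub_Rbar_empty_real by exact Hn.
    apply gstar_range.
Qed.

Lemma ex_RInt_gstar a b : ex_RInt (gstar g) a b.
Proof. apply ex_RInt_decreasing_01; [apply gstar_decreasing | apply gstar_range]. Qed.

End GeneralizedInverse.

Definition tail_repr (g : R -> R) (gam : R) : Prop :=
  forall x, I01 x -> RInt (gstar g) x 1 = gam * g x.

Section ClassC.

Variable g : R -> R.
Hypothesis HgC : classC g.

Lemma classC_g_0 : g 0 = 1.
Proof. apply HgC. Qed.

Lemma classC_g_1 : g 1 = 0.
Proof. apply HgC. Qed.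

Lemma classC_int01_pos : 0 < int01 g.
Proof. apply HgC. Qed.

Lemma classC_range x : I01 x -> I01 (g x).
Proof.
  intros Hx. destruct HgC as [[Hd [Hp [H0 _]]] _]. split; [apply Hp, Hx|].
  rewrite <- H0. apply Hd; unfold I01 in Hx; lra.
Qed.

Lemma g_gstar y : I01 y -> g (gstar g y) = y.
Proof.
  intros Hy. set (s := gstar g y). assert (Hs : I01 s) by apply gstar_range.
  pose proof (proj1 (continuous_within_eps _ _ _) (proj1 (proj2 HgC) s Hs)) as Hc.
  apply Rle_antisym.
  - (* points to the right of s lie outside the level set *)
    destruct (Req_dec s 1) as [E1|E1]; [rewrite E1, classC_g_1; apply Hy|].
    apply Rnot_lt_le. intros Hlt.
    destruct (Hc (g s - y)) as [d [Hd Hcs]]; [lra|].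
    set (x := Rmin (s + d / 2) 1).
    assert (Hx : I01 x) by (unfold x, I01, Rmin in *; destruct Rle_dec; lra).
    assert (Hsx : s < x) by (unfold x, I01, Rmin in *; destruct Rle_dec; lra).
    assert (Hxd : Rabs (x - s) < d).
    { rewrite Rabs_right by lra. unfold x, Rmin; destruct Rle_dec; lra. }
    specialize (Hcs x Hx Hxd). apply Rabs_lt_between in Hcs.
    assert (x <= s) by (apply gstar_ub; [exact Hx | lra]). lra.
  - (* points of the level set accumulate at s from the left *)
    apply Rnot_lt_le. intros Hlt.
    destruct (Hc (y - g s)) as [d [Hd Hcs]]; [lra|].
    assert (Hex : exists e, I01 e /\ y <= g e /\ s - d / 2 < e).
    { apply NNPP. intros Hn. assert (s <= s - d / 2); [|lra].
      apply gstar_least.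
      - exists 0. split; [unfold I01; lra | rewrite classC_g_0; apply Hy].
      - intros x Hx Hyx. apply Rnot_lt_le. intros Hlt'. apply Hn. eauto. }
    destruct Hex as [e [He [Hye Hse]]].
    assert (e <= s) by (apply gstar_ub; assumption).
    assert (Hed : Rabs (e - s) < d) by (rewrite Rabs_left1 by lra; lra).
    specialize (Hcs e He Hed). apply Rabs_lt_between in Hcs. lra.
Qed.

Lemma gstar_pos y : 0 <= y < 1 -> 0 < gstar g y.
Proof.
  intros Hy. destruct (gstar_range g y) as [[Hpos|E0] _]; [exact Hpos|].
  pose proof (g_gstar y ltac:(unfold I01; lra)) as E. rewrite <- E0, classC_g_0 in E. lra.
Qed.

Lemma gstar_lt_1 y : 0 < y <= 1 -> gstar g y < 1.
Proof.
  intros Hy. destruct (gstar_range g y) as [_ [Hlt|E1]]; [exact Hlt|].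
  pose proof (g_gstar y ltac:(unfold I01; lra)) as E. rewrite E1, classC_g_1 in E. lra.
Qed.

Lemma RInt_gstar_pos x y : 0 <= x < y -> y <= 1 -> 0 < RInt (gstar g) x y.
Proof.
  intros Hxy Hy. set (m := (x + y) / 2).
  rewrite <- (RInt_Chasles_R _ x m y) by apply ex_RInt_gstar.
  pose proof (RInt_decreasing_lb _ x m (gstar_decreasing g) (ex_RInt_gstar g _ _)
                ltac:(unfold m; lra)).
  pose proof (RInt_decreasing_lb _ m y (gstar_decreasing g) (ex_RInt_gstar g _ _)
                ltac:(unfold m; lra)).
  pose proof (gstar_pos m ltac:(unfold m; lra)). destruct (gstar_range g y).
  assert (0 < (m - x) * gstar g m) by (apply Rmult_lt_0_compat; unfold m in *; lra).
  assert (0 <= (y - m) * gstar g y) by (apply Rmult_le_pos; unfold m in *; lra).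
  lra.
Qed.

Lemma Top_fixed_strictly_decreasing :
  (forall x, I01 x -> Top g x = g x) -> strictly_decreasing01 g.
Proof.
  intros HT x y Hx Hxy Hy.
  rewrite <- (HT x), <- (HT y) by (unfold I01; lra). unfold Top.
  rewrite <- (RInt_Chasles_R _ x y 1) by apply ex_RInt_gstar.
  pose proof (RInt_gstar_pos x y ltac:(lra) Hy).
  unfold Rdiv. apply Rmult_lt_compat_r; [apply Rinv_0_lt_compat, classC_int01_pos | lra].
Qed.

Lemma Top_fixed_tail_repr :
  (forall x, I01 x -> Top g x = g x) -> tail_repr g (int01 g).
Proof.
  intros HT x Hx. pose proof (HT x Hx) as E. unfold Top, Rdiv in E.
  pose proof classC_int01_pos.
  rewrite <- E, Rmult_comm, Rmult_assoc, Rinv_l by lra. symmetry. apply Rmult_1_r.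
Qed.

Lemma solves_ode_strictly_decreasing gam : solves_ode g gam -> strictly_decreasing01 g.
Proof.
  intros [_ [gi [Hgi _]]] x y Hx Hxy Hy.
  destruct HgC as [[Hd _] _]. destruct (Hd x y Hx (Rlt_le _ _ Hxy) Hy) as [Hlt|E]; [exact Hlt|].
  destruct (Hgi x ltac:(unfold I01; lra)) as [_ [E1 _]].
  destruct (Hgi y ltac:(unfold I01; lra)) as [_ [E2 _]].
  rewrite E in E2. lra.
Qed.

Hypothesis Hsd : strictly_decreasing01 g.

Lemma gstar_g x : I01 x -> gstar g (g x) = x.
Proof.
  intros Hx. pose proof (gstar_ub g (g x) x Hx (Rle_refl _)) as Hle.
  pose proof (g_gstar (g x) (classC_range x Hx)) as E.
  destruct Hle as [Hlt|Heq]; [|symmetry; exact Heq].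
  destruct Hx as [Hx0 _]. destruct (gstar_range g (g x)) as [_ Hs1].
  pose proof (Hsd x _ Hx0 Hlt Hs1). lra.
Qed.

Lemma gstar_0 : gstar g 0 = 1.
Proof. rewrite <- classC_g_1. apply gstar_g. unfold I01. lra. Qed.

Lemma gstar_1 : gstar g 1 = 0.
Proof. rewrite <- classC_g_0. apply gstar_g. unfold I01. lra. Qed.

Lemma continuous_gstar y : continuous (gstar g) y.
Proof.
  apply continuous_decreasing_onto_01; [apply gstar_decreasing | apply gstar_range|].
  intros v Hv. exists (g v). apply gstar_g, Hv.
Qed.

Lemma solves_ode_inverse_gstar gi :
  (forall x, I01 x -> I01 (gi x) /\ gi (g x) = x /\ g (gi x) = x) ->
  forall y, I01 y -> gi y = gstar g y.
Proof.
  intros Hgi y Hy. destruct (Hgi y Hy) as [Hi [_ E]].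
  rewrite <- (gstar_g (gi y) Hi), E. reflexivity.
Qed.

Lemma solves_ode_tail_repr gam : 0 < gam -> solves_ode g gam -> tail_repr g gam.
Proof.
  intros Hgam [_ [gi [Hgi Hder]]] x Hx.
  set (K := fun y => RInt (gstar g) y 1 - gam * g (clamp01 y)).
  assert (HK : K x = K 1).
  { apply eq_of_is_derive_0; [apply Hx| |].
    - intros t Ht. replace 0 with (- gstar g t - gam * (- gi t / gam)).
      + apply (is_derive_minus _ (fun y => gam * g (clamp01 y))).
        * apply is_derive_RInt_lower; [apply ex_RInt_gstar | apply continuous_gstar].
        * apply (is_derive_scal (fun y => g (clamp01 y))).
          apply is_derive_clamp01_comp; [apply Hder |]; unfold I01l, I01 in *; lra.
      + rewrite (solves_ode_inverse_gstar gi Hgi t) by (unfold I01 in *; lra). field. lra.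
    - intros t _. apply (continuous_minus _ (fun y => gam * g (clamp01 y))).
      + eapply ex_derive_continuous. eexists.
        apply is_derive_RInt_lower; [apply ex_RInt_gstar | apply continuous_gstar].
      + apply (continuous_scal_r gam (fun y => g (clamp01 y))).
        apply continuous_clamp01_comp, HgC. }
  unfold K in HK. rewrite RInt_point_R, !clamp01_id, classC_g_1 in HK by (unfold I01 in *; lra).
  lra.
Qed.

End ClassC.

(** * The tail representation *)

Section TailRepresentation.

Variables (g : R -> R) (gam : R).
Hypotheses (HgC : classC g) (Hsd : strictly_decreasing01 g) (Hgam : 0 < gam)
  (Hrepr : tail_repr g gam).

Lemma tail_repr_eq x : I01 x -> / gam * RInt (gstar g) x 1 = g x.
Proof. intros Hx. rewrite Hrepr by exact Hx. field. lra. Qed.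

Lemma is_derive_tail_repr t :
  is_derive (fun y => / gam * RInt (gstar g) y 1) t (/ gam * - gstar g t).
Proof.
  apply (is_derive_scal (fun y => RInt (gstar g) y 1)).
  apply is_derive_RInt_lower; [apply ex_RInt_gstar | apply continuous_gstar; assumption].
Qed.

Lemma tail_repr_deriv x : I01 x -> has_deriv_on I01 g x (- gstar g x / gam).
Proof.
  intros Hx. apply (has_deriv_on_ext I01 (fun y => / gam * RInt (gstar g) y 1));
    [exact tail_repr_eq | exact Hx |].
  replace (- gstar g x / gam) with (/ gam * - gstar g x) by (field; lra).
  apply is_derive_has_deriv_on, is_derive_tail_repr.
Qed.

Lemma continuous_tail_repr_deriv x : continuous (fun y => - gstar g y / gam) x.
Proof.
  apply (continuous_ext (fun y => scal (- / gam) (gstar g y))).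
  - intros y. change (- / gam * gstar g y = - gstar g y / gam). field. lra.
  - exact (continuous_scal_r (- / gam) (gstar g) x (continuous_gstar g HgC Hsd x)).
Qed.

Lemma tail_repr_C1 : C1_on_0_1 g (fun x => - gstar g x / gam).
Proof.
  split.
  - intros x Hx. apply tail_repr_deriv. unfold I01l, I01 in *. lra.
  - apply continuous_on_of_continuous. intros x _. apply continuous_tail_repr_deriv.
Qed.

(* The integral-of-the-inverse identity, with T a differentiable extension of g to R. *)
Lemma tail_repr_int01 : int01 g = gam.
Proof.
  set (h := gstar g). set (T := fun y => / gam * RInt h y 1).
  assert (HT : forall t, is_derive T t (/ gam * - h t)) by apply is_derive_tail_repr.
  assert (HTc : forall t, continuous T t).
  { intros t. apply (ex_derive_continuous T). exists (/ gam * - h t). apply HT. }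
  assert (HTi : forall u v, ex_RInt T u v).
  { intros u v. apply (ex_RInt_continuous (V := R_CompleteNormedModule)).
    intros z _. apply HTc. }
  assert (HTg : forall t, I01 t -> T t = g t) by exact tail_repr_eq.
  assert (Hhc : forall t, continuous h t) by (apply continuous_gstar; assumption).
  set (M := fun y => RInt T y 1 - RInt h 0 (T y) + y * T y).
  assert (HM : forall t, is_derive M t
            (- T t - / gam * - h t * h (T t) + (1 * T t + t * (/ gam * - h t)))).
  { intros t. apply (is_derive_plus (fun y => RInt T y 1 - RInt h 0 (T y)) (fun y => y * T y)).
    - apply (is_derive_minus (fun y => RInt T y 1) (fun y => RInt h 0 (T y))).
      + apply is_derive_RInt_lower; [exact HTi | apply HTc].
      + apply (is_derive_comp (fun u => RInt h 0 u) T); [|apply HT].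
        apply is_derive_RInt_upper; [apply ex_RInt_gstar | apply Hhc].
    - apply (is_derive_mult (fun y => y) T);
        [apply (is_derive_id t) | apply HT | exact Rmult_comm]. }
  assert (HM01 : M 0 = M 1).
  { apply eq_of_is_derive_0; [lra| |].
    - intros t Ht.
      replace 0 with (- T t - / gam * - h t * h (T t) + (1 * T t + t * (/ gam * - h t))).
      + apply HM.
      + rewrite HTg by (unfold I01; lra). unfold h. rewrite gstar_g by (auto; unfold I01; lra).
        ring.
    - intros t _. apply (ex_derive_continuous M). eexists. apply HM. }
  unfold M in HM01.
  rewrite (HTg 0), (HTg 1), (classC_g_0 g HgC), (classC_g_1 g HgC), !RInt_point_R in HM01
    by (unfold I01; lra).
  assert (Hh : RInt h 0 1 = gam).
  { unfold h. rewrite Hrepr, (classC_g_0 g HgC) by (unfold I01; lra). apply Rmult_1_r. }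
  unfold int01. transitivity (RInt T 0 1).
  - apply RInt_ext. intros x Hx. rewrite Rmin_left, Rmax_right in Hx by lra.
    symmetry. apply HTg. unfold I01. lra.
  - lra.
Qed.

Lemma tail_repr_convex : convex01 g.
Proof.
  intros x y t Hx Hy Ht.
  assert (Hz : I01 (t * x + (1 - t) * y)) by (unfold I01 in *; split; nra).
  rewrite <- !tail_repr_eq by assumption.
  pose proof (convex01_RInt_tail (gstar g) (gstar_decreasing g) (ex_RInt_gstar g) x y t Hx Hy Ht)
    as K.
  apply Rmult_le_compat_l with (r := / gam) in K; [lra|].
  apply Rlt_le, Rinv_0_lt_compat, Hgam.
Qed.

Lemma tail_repr_one_sub x : I01 x -> gam * (1 - g x) = RInt (gstar g) 0 x.
Proof.
  intros Hx.
  pose proof (RInt_Chasles_R (gstar g) 0 x 1 (ex_RInt_gstar g _ _) (ex_RInt_gstar g _ _)) as E.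
  rewrite !Hrepr, (classC_g_0 g HgC) in E by (unfold I01 in *; lra). lra.
Qed.

(* Sandwich gam (1 - g x) = int_0^x g^* between x g^*(x) and x; as x -> 0, g^*(x) -> 1. *)
Lemma tail_repr_stride : stride g = gam.
Proof.
  unfold stride. rewrite (is_lub_Rbar_unique _ gam); [reflexivity|]. split.
  - intros a [Ha HA]. simpl.
    assert (Hbound : forall x, 0 < x <= 1 -> a * gstar g x <= gam).
    { intros x Hx. pose proof (HA x ltac:(unfold I01; lra)).
      pose proof (tail_repr_one_sub x ltac:(unfold I01; lra)).
      pose proof (RInt_decreasing_lb (gstar g) 0 x (gstar_decreasing g) (ex_RInt_gstar g _ _)
                    ltac:(lra)).
      apply Rmult_le_reg_l with x; [lra|]. nra. }
    assert (Hlim : Rbar_le (a * gstar g 0) gam).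
    { apply (filterlim_le (F := at_right 0) (fun x => a * gstar g x) (fun _ => gam)).
      - exists (mkposreal 1 Rlt_0_1). intros y Hy Hy0. apply Hbound.
        change (Rabs (y - 0) < 1) in Hy. apply Rabs_lt_between in Hy. lra.
      - apply continuous_within.
        exact (continuous_scal_r a (gstar g) 0 (continuous_gstar g HgC Hsd 0)).
      - apply filterlim_const. }
    simpl in Hlim. rewrite gstar_0 in Hlim by assumption. lra.
  - intros b Hb. apply Hb. split; [lra|]. intros x Hx.
    pose proof (tail_repr_one_sub x Hx).
    pose proof (RInt_decreasing_ub (gstar g) 0 x (gstar_decreasing g) (ex_RInt_gstar g _ _)
                  ltac:(apply Hx)).
    rewrite gstar_0 in * by assumption. lra.
Qed.

Lemma tail_repr_solves_ode : solves_ode g gam.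
Proof.
  split; [exact (classC_range g HgC)|]. exists (gstar g). split.
  - intros x Hx. split; [apply gstar_range|].
    split; [apply gstar_g | apply g_gstar]; assumption.
  - intros x Hx. apply tail_repr_deriv. unfold I01l, I01 in *. lra.
Qed.

Lemma tail_repr_Top_fixed x : I01 x -> Top g x = g x.
Proof. intros Hx. unfold Top. rewrite tail_repr_int01, Hrepr by exact Hx. field. lra. Qed.

Lemma gstar_gstar_pos y : I01l y -> 0 < gstar g (gstar g y).
Proof.
  intros Hy. apply gstar_pos; [exact HgC|]. split; [apply gstar_range|].
  apply gstar_lt_1; assumption.
Qed.

Lemma tail_repr_gstar_deriv y :
  I01l y -> has_deriv_on I01 (gstar g) y (- gam / gstar g (gstar g y)).
Proof.
  intros Hy. pose proof (gstar_gstar_pos y Hy) as Hpos.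
  replace (- gam / gstar g (gstar g y)) with (/ (- gstar g (gstar g y) / gam))
    by (field; split; lra).
  apply (has_deriv_on_inverse I01 g).
  - intros u Hu. split; [apply gstar_range | apply g_gstar; assumption].
  - unfold I01l, I01 in *. lra.
  - apply continuous_gstar; assumption.
  - apply tail_repr_deriv, gstar_range.
  - assert (0 < / gam) by (apply Rinv_0_lt_compat, Hgam). unfold Rdiv. intros E. nra.
Qed.

Lemma continuous_inv_gstar_gstar y : I01l y -> continuous (fun y => / gstar g (gstar g y)) y.
Proof.
  intros Hy. apply (continuous_Rinv_comp (fun y => gstar g (gstar g y))).
  - apply (continuous_comp (gstar g) (gstar g)); apply continuous_gstar; assumption.
  - pose proof (gstar_gstar_pos y Hy). lra.
Qed.

Lemma tail_repr_classDsharp_breve : classDsharp_breve g.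
Proof.
  split; [|split; [exact HgC | exact tail_repr_convex]].
  split; [split; assumption|]. exists (fun x => - gstar g x / gam).
  split; [exact tail_repr_C1|]. split.
  - rewrite gstar_1 by assumption. field. lra.
  - exists (- gstar g 0 / gam). split.
    + rewrite gstar_0 by assumption. assert (0 < / gam) by (apply Rinv_0_lt_compat, Hgam).
      unfold Rdiv. lra.
    + apply (continuous_within _ (fun x => - gstar g x / gam) 0), continuous_tail_repr_deriv.
Qed.

Lemma tail_repr_second_derivatives :
  exists g1 g2 s1, C1_on_0_1 g g1 /\ C1_on_0_1 g1 g2 /\ C1_on_0_1 (gstar g) s1 /\
    g2 1 = 1 /\ s1 1 = - gam.
Proof.
  exists (fun x => - gstar g x / gam), (fun y => / gstar g (gstar g y)),
    (fun y => - gam / gstar g (gstar g y)).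
  split; [exact tail_repr_C1|]. split; [split|split; [split|]].
  - intros y Hy. pose proof (gstar_gstar_pos y Hy).
    replace (/ gstar g (gstar g y)) with (- / gam * (- gam / gstar g (gstar g y)))
      by (field; split; lra).
    apply (has_deriv_on_ext I01 (fun y => - / gam * gstar g y)).
    + intros u _. field. lra.
    + unfold I01l, I01 in *. lra.
    + apply has_deriv_on_scal, tail_repr_gstar_deriv, Hy.
  - apply continuous_on_of_continuous, continuous_inv_gstar_gstar.
  - exact tail_repr_gstar_deriv.
  - apply continuous_on_of_continuous. intros y Hy.
    apply (continuous_ext (fun y => scal (- gam) (/ gstar g (gstar g y)))).
    + intros u. change (- gam * / gstar g (gstar g u) = - gam / gstar g (gstar g u)).
      reflexivity.
    + exact (continuous_scal_r (- gam) _ y (continuous_inv_gstar_gstar y Hy)).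
  - rewrite gstar_1, gstar_0 by assumption. split; field.
Qed.

End TailRepresentation.

Theorem proposition2p3 (g : R -> R) (Hg : classC g) :
  ((forall x, I01 x -> Top g x = g x) <-> (exists gamma, 0 < gamma /\ solves_ode g gamma)) /\
  (forall gamma, 0 < gamma -> solves_ode g gamma ->
     classDsharp_breve g /\
     int01 g = gamma /\
     stride g = gamma /\
     (exists g1 g2 s1,
        C1_on_0_1 g g1 /\ C1_on_0_1 g1 g2 /\ C1_on_0_1 (gstar g) s1 /\
        g2 1 = 1 /\ s1 1 = - gamma)).
Proof.
  assert (Hode : forall gam, 0 < gam -> solves_ode g gam ->
    strictly_decreasing01 g /\ tail_repr g gam).
  { intros gam Hgam Hsol. pose proof (solves_ode_strictly_decreasing g Hg gam Hsol) as Hsd.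
    split; [exact Hsd | exact (solves_ode_tail_repr g Hg Hsd gam Hgam Hsol)]. }
  split; [split|].
  - intros HT. pose proof (Top_fixed_strictly_decreasing g Hg HT) as Hsd.
    pose proof (classC_int01_pos g Hg) as Hpos.
    exists (int01 g). split; [exact Hpos|].
    exact (tail_repr_solves_ode g (int01 g) Hg Hsd Hpos (Top_fixed_tail_repr g Hg HT)).
  - intros [gam [Hgam Hsol]]. destruct (Hode gam Hgam Hsol) as [Hsd Hrepr].
    exact (tail_repr_Top_fixed g gam Hg Hsd Hgam Hrepr).
  - intros gam Hgam Hsol. destruct (Hode gam Hgam Hsol) as [Hsd Hrepr].
    split; [|split; [|split]].
    + exact (tail_repr_classDsharp_breve g gam Hg Hsd Hgam Hrepr).
    + exact (tail_repr_int01 g gam Hg Hsd Hgam Hrepr).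
    + exact (tail_repr_stride g gam Hg Hsd Hgam Hrepr).
    + exact (tail_repr_second_derivatives g gam Hg Hsd Hgam Hrepr).
Qed.
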